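(* Consider the FitzHugh–Nagumo system $\dot x_1=x_1-x_1^3/3-x_2+I$, $\dot x_2=cx_1-bx_2+a$ with real parameters satisfying $0<b<1$ and $b<c$. Let $\sigma\in\{1,-1\}$, $y_1^*=\sigma\sqrt{1-b}$, $y_2^*=(a+cy_1^* )/b$, and $I=y_2^*-y_1^*+(y_1^* )^3/3$. Then $(y_1^*,y_2^* )$ is a stationary point at which the Jacobian has trace zero and positive determinant $c-b^2$, hence a nonzero purely imaginary pair of eigenvalues. In translated coordinates $u=x_1-y_1^*$, $w=x_2-y_2^*$, the quadratic form $\psi=cu^2-2buw+w^2$ is positive definite and spans the kernel of the Lie derivative of the linearization on quadratic forms, and there is $\widehat\psi=\psi+O(|(u,w)|^3)$ with $$L_q(\widehat\psi)=-\frac{b^2-2b+c}{4(b^2-c)^2}\,\psi^2+O(|(u,w)|^5),$$ where $q$ is the (translated) vector field. In particular this coefficient is negative whenever $c\ge1$.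
   Context: For a vector field $g$, $L_g(\sigma)(x)=D\sigma(x)g(x)$. *)

From Stdlib Require Import Reals Lra.
Open Scope R_scope.

Definition fhn1 (I : R) (x1 x2 : R) : R := x1 - x1 ^ 3 / 3 - x2 + I.
Definition fhn2 (a b c : R) (x1 x2 : R) : R := c * x1 - b * x2 + a.

Definition jac11 (x1 : R) : R := 1 - x1 ^ 2.
Definition jac12 : R := -1.
Definition jac21 (c : R) : R := c.
Definition jac22 (b : R) : R := - b.

Definition ystar1 (sigma b : R) : R := sigma * sqrt (1 - b).
Definition ystar2 (sigma a b c : R) : R := (a + c * ystar1 sigma b) / b.
Definition Ipar (sigma a b c : R) : R :=
  ystar2 sigma a b c - ystar1 sigma b + (ystar1 sigma b) ^ 3 / 3.

Definition q1 (sigma a b c : R) (u w : R) : R :=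
  fhn1 (Ipar sigma a b c) (u + ystar1 sigma b) (w + ystar2 sigma a b c).
Definition q2 (sigma a b c : R) (u w : R) : R :=
  fhn2 a b c (u + ystar1 sigma b) (w + ystar2 sigma a b c).

Definition psi (b c : R) (u w : R) : R := c * u ^ 2 - 2 * b * u * w + w ^ 2.

Definition nrm (u w : R) : R := sqrt (u ^ 2 + w ^ 2).

Definition bigO_at0 (g : R -> R -> R) (k : nat) : Prop :=
  exists C delta, 0 < delta /\ forall u w, nrm u w < delta ->
    Rabs (g u w) <= C * (nrm u w) ^ k.

Definition diff2 (f D1 D2 : R -> R -> R) : Prop :=
  forall u w eps, 0 < eps -> exists delta, 0 < delta /\
    forall h k, nrm h k < delta ->
      Rabs (f (u + h) (w + k) - f u w - D1 u w * h - D2 u w * k) <= eps * nrm h k.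

Definition lie (D1 D2 g1 g2 : R -> R -> R) (u w : R) : R :=
  D1 u w * g1 u w + D2 u w * g2 u w.

(* Quadratic form with coefficients (p,r,s) and the Lie derivative of the
   linear field z |-> A z on it (computed from its gradient (2pu+rw, ru+2sw)). *)
Definition qform (p r s u w : R) : R := p * u ^ 2 + r * u * w + s * w ^ 2.
Definition lie_lin_qform (A11 A12 A21 A22 p r s u w : R) : R :=
  (2 * p * u + r * w) * (A11 * u + A12 * w) + (r * u + 2 * s * w) * (A21 * u + A22 * w).

From Stdlib Require Import Reals Lra List Lia.
Import ListNotations.
Open Scope R_scope.

(* In the translated coordinates the field is [(b u - w - y u^2 - u^3/3, c u - b w)]
   with [y = y1*], [y^2 = 1 - b]; its linear part has trace 0 and determinant
   [c - b^2 > 0], and [psi] spans the kernel of its Lie derivative on quadratic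
   forms.  Adding to [psi] a cubic and a quartic correction removes every term of
   degree 3 and 4 from [L_q(psihat)] except the resonant multiple of [psi^2],
   which cannot be removed; everything left is a polynomial with monomials of
   degree 5 and 6 only.  All the functions involved are explicit polynomials,
   so differentiability and the [O] estimates reduce to bookkeeping on lists of
   monomials. *)

Lemma nrm_ge0 u w : 0 <= nrm u w.
Proof. apply sqrt_pos. Qed.

Lemma Rabs_le_nrm_l u w : Rabs u <= nrm u w.
Proof. rewrite <- sqrt_Rsqr_abs; apply sqrt_le_1_alt; unfold Rsqr; nra. Qed.

Lemma Rabs_le_nrm_r u w : Rabs w <= nrm u w.
Proof. rewrite <- sqrt_Rsqr_abs; apply sqrt_le_1_alt; unfold Rsqr; nra. Qed.

Lemma Rle_pow_le1 x m n : 0 <= x <= 1 -> (m <= n)%nat -> x ^ n <= x ^ m.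
Proof.
  intros Hx Hmn. replace n with (m + (n - m))%nat by lia. rewrite pow_add.
  assert (0 <= x ^ m) by (apply pow_le; lra).
  assert (x ^ (n - m) <= 1) by (rewrite <- (pow1 (n - m)); apply pow_incr; lra).
  nra.
Qed.

Lemma bigO_ext f g k : (forall u w, f u w = g u w) -> bigO_at0 g k -> bigO_at0 f k.
Proof. intros E [C [d [Hd H]]]. exists C, d. split; auto. intros u w. rewrite E. auto. Qed.

(* A list of monomials [(a, i, j)] stands for [sum a u^i w^j]. *)
Definition poly2 := list (R * nat * nat).

Definition mono (a : R) (i j : nat) : R * nat * nat := (a, i, j).

Fixpoint peval (p : poly2) (u w : R) : R :=
  match p with [] => 0 | (a, i, j) :: t => a * u ^ i * w ^ j + peval t u w end.

Fixpoint coef_norm (p : poly2) : R :=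
  match p with [] => 0 | (a, _, _) :: t => Rabs a + coef_norm t end.

Fixpoint low_degree_ge (k : nat) (p : poly2) : bool :=
  match p with [] => true | (_, i, j) :: t => Nat.leb k (i + j) && low_degree_ge k t end.

Definition pderiv_u (p : poly2) : poly2 :=
  map (fun m => let '(a, i, j) := m in (a * INR i, pred i, j)) p.

Definition pderiv_w (p : poly2) : poly2 :=
  map (fun m => let '(a, i, j) := m in (a * INR j, i, pred j)) p.

Lemma monomial_bound a i j u w :
  nrm u w <= 1 -> Rabs (a * u ^ i * w ^ j) <= Rabs a * nrm u w ^ (i + j).
Proof.
  intros Hn. pose proof (nrm_ge0 u w).
  rewrite !Rabs_mult, <- !RPow_abs, pow_add, Rmult_assoc.
  apply Rmult_le_compat_l; [apply Rabs_pos|].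
  apply Rmult_le_compat; try (apply pow_le, Rabs_pos);
    apply pow_incr; split; auto using Rabs_pos, Rabs_le_nrm_l, Rabs_le_nrm_r.
Qed.

Lemma peval_bigO p k : low_degree_ge k p = true -> bigO_at0 (peval p) k.
Proof.
  intros Hp. exists (coef_norm p), 1. split; [lra|].
  intros u w Hn. pose proof (nrm_ge0 u w).
  induction p as [|[[a i] j] t IH]; simpl in *.
  - rewrite Rabs_R0. lra.
  - apply andb_prop in Hp as [Hk Ht]. apply Nat.leb_le in Hk.
    eapply Rle_trans; [apply Rabs_triang|].
    rewrite Rmult_plus_distr_r. apply Rplus_le_compat; [|exact (IH Ht)].
    eapply Rle_trans; [apply monomial_bound; lra|].
    apply Rmult_le_compat_l; [apply Rabs_pos|]. apply Rle_pow_le1; lra || lia.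
Qed.

(* A local quadratic bound on the first-order Taylor remainder; unlike [diff2]
   it is stable under products with an explicit constant. *)
Definition quad_taylor (f D1 D2 : R -> R -> R) : Prop :=
  forall u w, exists M, 0 <= M /\ forall h k, nrm h k < 1 ->
    Rabs (f (u + h) (w + k) - f u w - D1 u w * h - D2 u w * k) <= M * nrm h k ^ 2.

Lemma quad_taylor_diff2 f D1 D2 : quad_taylor f D1 D2 -> diff2 f D1 D2.
Proof.
  intros HQ u w eps He. destruct (HQ u w) as [M [HM HB]].
  exists (Rmin 1 (eps / (M + 1))). split.
  { apply Rmin_glb_lt; [lra|]. apply Rdiv_lt_0_compat; lra. }
  intros h k Hn. pose proof (nrm_ge0 h k).
  assert (Hn1 : nrm h k < 1) by (eapply Rlt_le_trans; [exact Hn | apply Rmin_l]).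
  assert (Hn2 : nrm h k * (M + 1) <= eps).
  { apply (Rmult_le_reg_r (/ (M + 1))); [apply Rinv_0_lt_compat; lra|].
    rewrite Rmult_assoc, Rinv_r by lra.
    pose proof (Rmin_r 1 (eps / (M + 1))). unfold Rdiv in *. lra. }
  eapply Rle_trans; [exact (HB h k Hn1)|]. simpl. nra.
Qed.

Lemma quad_taylor_ext f D1 D2 f' D1' D2' :
  (forall u w, f u w = f' u w) -> (forall u w, D1 u w = D1' u w) ->
  (forall u w, D2 u w = D2' u w) -> quad_taylor f D1 D2 -> quad_taylor f' D1' D2'.
Proof.
  intros E E1 E2 H u w. destruct (H u w) as [M [HM HB]]. exists M; split; auto.
  intros h k. rewrite <- !E, <- E1, <- E2. auto.
Qed.

Lemma quad_taylor_affine a b0 b1 :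
  quad_taylor (fun u w => a + b0 * u + b1 * w) (fun _ _ => b0) (fun _ _ => b1).
Proof.
  intros u w. exists 0. split; [lra|]. intros h k _.
  replace (_ - _ - _ - _) with 0 by ring. rewrite Rabs_R0. lra.
Qed.

Lemma quad_taylor_plus f D1 D2 g E1 E2 : quad_taylor f D1 D2 -> quad_taylor g E1 E2 ->
  quad_taylor (fun u w => f u w + g u w)
    (fun u w => D1 u w + E1 u w) (fun u w => D2 u w + E2 u w).
Proof.
  intros Hf Hg u w. destruct (Hf u w) as [M [HM HB]], (Hg u w) as [N [HN HC]].
  exists (M + N). split; [lra|]. intros h k Hn.
  specialize (HB h k Hn). specialize (HC h k Hn).
  match goal with |- Rabs ?e <= _ =>
    replace e with ((f (u + h) (w + k) - f u w - D1 u w * h - D2 u w * k) +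
                    (g (u + h) (w + k) - g u w - E1 u w * h - E2 u w * k)) by ring end.
  eapply Rle_trans; [apply Rabs_triang | lra].
Qed.

Lemma Rabs_linear_le a b h k : Rabs (a * h + b * k) <= (Rabs a + Rabs b) * nrm h k.
Proof.
  eapply Rle_trans; [apply Rabs_triang|]. rewrite !Rabs_mult.
  pose proof (Rabs_le_nrm_l h k). pose proof (Rabs_le_nrm_r h k).
  pose proof (Rabs_pos a). pose proof (Rabs_pos b). nra.
Qed.

Lemma quad_taylor_mult f D1 D2 g E1 E2 : quad_taylor f D1 D2 -> quad_taylor g E1 E2 ->
  quad_taylor (fun u w => f u w * g u w)
    (fun u w => f u w * E1 u w + g u w * D1 u w)
    (fun u w => f u w * E2 u w + g u w * D2 u w).
Proof.
  intros Hf Hg u w. destruct (Hf u w) as [M [HM HB]], (Hg u w) as [N [HN HC]].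
  set (Lf := Rabs (D1 u w) + Rabs (D2 u w)). set (Lg := Rabs (E1 u w) + Rabs (E2 u w)).
  assert (0 <= Lf) by (unfold Lf; pose proof (Rabs_pos (D1 u w)); pose proof (Rabs_pos (D2 u w)); lra).
  assert (0 <= Lg) by (unfold Lg; pose proof (Rabs_pos (E1 u w)); pose proof (Rabs_pos (E2 u w)); lra).
  pose proof (Rabs_pos (f u w)). pose proof (Rabs_pos (g u w)).
  exists (Rabs (f u w) * N + Rabs (g u w) * M + (Lf + M) * (Lg + N)).
  split; [nra|]. intros h k Hn.
  specialize (HB h k Hn). specialize (HC h k Hn). pose proof (nrm_ge0 h k).
  set (rf := f (u + h) (w + k) - f u w - D1 u w * h - D2 u w * k) in *.
  set (rg := g (u + h) (w + k) - g u w - E1 u w * h - E2 u w * k) in *.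
  set (df := D1 u w * h + D2 u w * k). set (dg := E1 u w * h + E2 u w * k).
  match goal with |- Rabs ?e <= _ =>
    replace e with (f u w * rg + g u w * rf + (df + rf) * (dg + rg))
      by (unfold rf, rg, df, dg; ring) end.
  assert (Hsq : nrm h k ^ 2 <= nrm h k) by (simpl; nra).
  assert (Af : Rabs (df + rf) <= (Lf + M) * nrm h k).
  { eapply Rle_trans; [apply Rabs_triang|].
    pose proof (Rabs_linear_le (D1 u w) (D2 u w) h k) as Hdf. fold df Lf in Hdf.
    assert (M * nrm h k ^ 2 <= M * nrm h k) by (apply Rmult_le_compat_l; lra). lra. }
  assert (Ag : Rabs (dg + rg) <= (Lg + N) * nrm h k).
  { eapply Rle_trans; [apply Rabs_triang|].
    pose proof (Rabs_linear_le (E1 u w) (E2 u w) h k) as Hdg. fold dg Lg in Hdg.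
    assert (N * nrm h k ^ 2 <= N * nrm h k) by (apply Rmult_le_compat_l; lra). lra. }
  assert (Rabs (df + rf) * Rabs (dg + rg) <= (Lf + M) * nrm h k * ((Lg + N) * nrm h k))
    by (apply Rmult_le_compat; auto using Rabs_pos).
  eapply Rle_trans; [apply Rabs_triang|].
  eapply Rle_trans; [apply Rplus_le_compat_r, Rabs_triang|].
  rewrite !Rabs_mult. simpl in *. nra.
Qed.

Lemma quad_taylor_pow_u i :
  quad_taylor (fun u _ => u ^ i) (fun u _ => INR i * u ^ pred i) (fun _ _ => 0).
Proof.
  induction i as [|i IH].
  - eapply quad_taylor_ext; [| | |apply (quad_taylor_affine 1 0 0)]; intros; simpl; ring.
  - eapply quad_taylor_ext;
      [| | |apply (quad_taylor_mult _ _ _ _ _ _ (quad_taylor_affine 0 1 0) IH)];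
      intros; rewrite ?S_INR; destruct i; simpl; ring.
Qed.

Lemma quad_taylor_pow_w j :
  quad_taylor (fun _ w => w ^ j) (fun _ _ => 0) (fun _ w => INR j * w ^ pred j).
Proof.
  induction j as [|j IH].
  - eapply quad_taylor_ext; [| | |apply (quad_taylor_affine 1 0 0)]; intros; simpl; ring.
  - eapply quad_taylor_ext;
      [| | |apply (quad_taylor_mult _ _ _ _ _ _ (quad_taylor_affine 0 0 1) IH)];
      intros; rewrite ?S_INR; destruct j; simpl; ring.
Qed.

Lemma quad_taylor_peval p : quad_taylor (peval p) (peval (pderiv_u p)) (peval (pderiv_w p)).
Proof.
  induction p as [|[[a i] j] t IH]; simpl.
  - eapply quad_taylor_ext; [| | |apply (quad_taylor_affine 0 0 0)]; intros; simpl; ring.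
  - pose proof (quad_taylor_mult _ _ _ _ _ _
      (quad_taylor_mult _ _ _ _ _ _ (quad_taylor_affine a 0 0) (quad_taylor_pow_u i))
      (quad_taylor_pow_w j)) as Hm.
    eapply quad_taylor_ext; [| | |apply (quad_taylor_plus _ _ _ _ _ _ Hm IH)];
      intros; simpl; ring.
Qed.

Section CubicNormalForm.
Variables b c y : R.

Let D := c - b ^ 2.

(* Resonant coefficient of [psi^2]; equal to [-(b^2 - 2b + c)/(4(b^2 - c)^2)]
   once [y^2 = 1 - b]. *)
Definition resonant_coef : R := (2 * b * y ^ 2 - D) / (4 * D ^ 2).

(* [h0..h3] solve the homological equation in degree 3, [k0..k3] the one in
   degree 4 modulo the kernel direction [psi^2]. *)
Let h0 := -4 * b * c * y / (3 * D).
Let h1 := 2 * (b ^ 2 + c) * y / D.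
Let h2 := -4 * b * y / D.
Let h3 := 4 * y / (3 * D).
Let k3 := - resonant_coef.
Let k2 := 3 * b * resonant_coef.
Let k1 := (4 * b * y ^ 2 / D - (4 * b ^ 2 + 5 * c) * resonant_coef) / 3.
Let k0 := (2 * b * k1 + 10 * b * c * resonant_coef
           - 4 * (b ^ 2 + c) * y ^ 2 / D + 2 * b / 3) / 4.

Definition psihat_correction : poly2 :=
  [mono h0 3 0; mono h1 2 1; mono h2 1 2; mono h3 0 3;
   mono k0 4 0; mono k1 3 1; mono k2 2 2; mono k3 1 3].

Definition psihat_poly : poly2 :=
  [mono c 2 0; mono (-2 * b) 1 1; mono 1 0 2] ++ psihat_correction.

Definition normal_form_remainder : poly2 :=
  [mono (- h0 - 4 * k0 * y) 5 0; mono (- (2 / 3) * h1 - 3 * k1 * y) 4 1;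
   mono (- h2 / 3 - 2 * k2 * y) 3 2; mono (- k3 * y) 2 3;
   mono (-4 * k0 / 3) 6 0; mono (- k1) 5 1; mono (-2 * k2 / 3) 4 2; mono (- k3 / 3) 3 3].

Definition cubic_field1 (u w : R) : R := b * u - w - y * u ^ 2 - u ^ 3 / 3.
Definition cubic_field2 (u w : R) : R := c * u - b * w.

Hypothesis D_neq0 : D <> 0.

Lemma lie_psihat_poly u w :
  lie (peval (pderiv_u psihat_poly)) (peval (pderiv_w psihat_poly))
      cubic_field1 cubic_field2 u w
  - resonant_coef * psi b c u w ^ 2 = peval normal_form_remainder u w.
Proof.
  unfold lie, cubic_field1, cubic_field2, psihat_poly, psihat_correction,
    normal_form_remainder, pderiv_u, pderiv_w, mono, psi; simpl.
  unfold k0, k1, k2, k3, resonant_coef, h0, h1, h2, h3, D in *. field. exact D_neq0.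
Qed.

Lemma cubic_field_normal_form :
  exists psihat D1 D2 : R -> R -> R,
    diff2 psihat D1 D2 /\
    bigO_at0 (fun u w => psihat u w - psi b c u w) 3 /\
    bigO_at0 (fun u w => lie D1 D2 cubic_field1 cubic_field2 u w
                         - resonant_coef * psi b c u w ^ 2) 5.
Proof.
  exists (peval psihat_poly), (peval (pderiv_u psihat_poly)), (peval (pderiv_w psihat_poly)).
  split; [apply quad_taylor_diff2, quad_taylor_peval|]. split.
  - apply bigO_ext with (peval psihat_correction); [|apply peval_bigO; reflexivity].
    intros u w. unfold psihat_poly, psi. simpl. ring.
  - apply bigO_ext with (peval normal_form_remainder); [|apply peval_bigO; reflexivity].
    exact lie_psihat_poly.
Qed.

End CubicNormalForm.

Lemma char_roots_purely_imaginary tr d : tr = 0 -> 0 < d ->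
  exists omega, 0 < omega /\ forall x y,
    (x ^ 2 - y ^ 2 - tr * x + d = 0 /\ 2 * x * y - tr * y = 0) <->
    (x = 0 /\ (y = omega \/ y = - omega)).
Proof.
  intros -> Hd. exists (sqrt d). split; [apply sqrt_lt_R0; lra|].
  pose proof (sqrt_sqrt d ltac:(lra)) as Hs.
  intros x y. split.
  - intros [E1 E2].
    assert (Hx : x = 0).
    { destruct (Rmult_integral x y) as [|Hy]; [lra | auto | subst y; nra]. }
    subst x. split; [reflexivity|].
    destruct (Rmult_integral (y - sqrt d) (y + sqrt d)); [nra | left | right]; lra.
  - intros [-> [-> | ->]]; split; nra.
Qed.

Lemma psi_pos_def b c u w : b ^ 2 < c -> (u, w) <> (0, 0) -> 0 < psi b c u w.
Proof.
  intros Hbc Hne. unfold psi.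
  replace (c * u ^ 2 - 2 * b * u * w + w ^ 2)
    with ((c - b ^ 2) * u ^ 2 + (w - b * u) ^ 2) by ring.
  assert (Hsq : forall x, x <> 0 -> 0 < x ^ 2)
    by (intros x Hx; pose proof (Rsqr_pos_lt x Hx); unfold Rsqr in *; simpl; lra).
  destruct (Req_dec u 0) as [->|Hu].
  - assert (w <> 0) by (intros ->; apply Hne; reflexivity).
    pose proof (Hsq w H). replace (w - b * 0) with w by ring. nra.
  - pose proof (Hsq u Hu). pose proof (pow2_ge_0 (w - b * u)).
    assert (0 < (c - b ^ 2) * u ^ 2) by (apply Rmult_lt_0_compat; lra). lra.
Qed.

Lemma lie_lin_qform_kernel b c p r s : b <> 0 ->
  (forall u w, lie_lin_qform b (-1) c (- b) p r s u w = 0) <->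
  exists t, p = t * c /\ r = t * (- 2 * b) /\ s = t.
Proof.
  intros Hb. split.
  - intros H. exists s.
    pose proof (H 1 0) as E1. pose proof (H 0 1) as E2. unfold lie_lin_qform in E1, E2.
    assert (Er : r = s * (-2 * b)) by lra.
    repeat split; auto. subst r. apply (Rmult_eq_reg_r b); lra.
  - intros [t [-> [-> ->]]] u w. unfold lie_lin_qform. ring.
Qed.

Section FitzHughNagumo.
Variables a b c sigma : R.
Hypotheses (hb0 : 0 < b) (hb1 : b < 1) (hsigma : sigma = 1 \/ sigma = -1).

Lemma ystar1_sq : ystar1 sigma b ^ 2 = 1 - b.
Proof.
  unfold ystar1. rewrite Rpow_mult_distr, pow2_sqrt by lra.
  destruct hsigma as [-> | ->]; ring.
Qed.

Lemma jac11_ystar1 : jac11 (ystar1 sigma b) = b.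
Proof. unfold jac11. rewrite ystar1_sq. ring. Qed.

Lemma fhn_stationary :
  fhn1 (Ipar sigma a b c) (ystar1 sigma b) (ystar2 sigma a b c) = 0 /\
  fhn2 a b c (ystar1 sigma b) (ystar2 sigma a b c) = 0.
Proof. unfold fhn1, fhn2, Ipar, ystar2. split; field; lra. Qed.

Lemma q1_translated u w : q1 sigma a b c u w = cubic_field1 b (ystar1 sigma b) u w.
Proof.
  unfold q1, fhn1, Ipar, cubic_field1.
  replace (b * u) with ((1 - ystar1 sigma b ^ 2) * u) by (rewrite ystar1_sq; ring).
  field.
Qed.

Lemma q2_translated u w : q2 sigma a b c u w = cubic_field2 b c u w.
Proof. unfold q2, fhn2, ystar2, cubic_field2. field. lra. Qed.

Lemma resonant_coef_ystar1 :
  resonant_coef b c (ystar1 sigma b) = - (b ^ 2 - 2 * b + c) / (4 * (b ^ 2 - c) ^ 2).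
Proof.
  unfold resonant_coef. rewrite ystar1_sq.
  replace ((b ^ 2 - c) ^ 2) with ((c - b ^ 2) ^ 2) by ring.
  unfold Rdiv. ring.
Qed.

End FitzHughNagumo.

Lemma fhn_coef_neg b c : 0 < b -> b < 1 -> b < c -> 1 <= c ->
  - (b ^ 2 - 2 * b + c) / (4 * (b ^ 2 - c) ^ 2) < 0.
Proof.
  intros hb0 hb1 hbc hc. unfold Rdiv. rewrite Ropp_mult_distr_l_reverse.
  apply Ropp_lt_gt_0_contravar, Rmult_lt_0_compat.
  - replace (b ^ 2 - 2 * b + c) with ((1 - b) ^ 2 + (c - 1)) by ring.
    pose proof (pow_lt (1 - b) 2 ltac:(lra)). lra.
  - replace ((b ^ 2 - c) ^ 2) with ((c - b ^ 2) ^ 2) by ring.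
    apply Rinv_0_lt_compat, Rmult_lt_0_compat; [lra|].
    apply pow_lt. nra.
Qed.

Theorem mainTheorem10 (a b c sigma : R)
  (hb0 : 0 < b) (hb1 : b < 1) (hbc : b < c) (hsigma : sigma = 1 \/ sigma = -1) :
  let y1 := ystar1 sigma b in
  let y2 := ystar2 sigma a b c in
  let I := Ipar sigma a b c in
  let A11 := jac11 y1 in let A12 := jac12 in
  let A21 := jac21 c in let A22 := jac22 b in
  let tr := A11 + A22 in
  let det := A11 * A22 - A12 * A21 in
  let coef := - (b ^ 2 - 2 * b + c) / (4 * (b ^ 2 - c) ^ 2) in
  (fhn1 I y1 y2 = 0 /\ fhn2 a b c y1 y2 = 0) /\
  tr = 0 /\ det = c - b ^ 2 /\ 0 < det /\
  (exists omega, 0 < omega /\ forall x y,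
     (x ^ 2 - y ^ 2 - tr * x + det = 0 /\ 2 * x * y - tr * y = 0) <->
     (x = 0 /\ (y = omega \/ y = - omega))) /\
  (forall u w, (u, w) <> (0, 0) -> 0 < psi b c u w) /\
  (forall u w, psi b c u w = qform c (- 2 * b) 1 u w) /\
  (forall p r s, (forall u w, lie_lin_qform A11 A12 A21 A22 p r s u w = 0) <->
     exists t, p = t * c /\ r = t * (- 2 * b) /\ s = t) /\
  (exists psihat D1 D2 : R -> R -> R,
     diff2 psihat D1 D2 /\
     bigO_at0 (fun u w => psihat u w - psi b c u w) 3 /\
     bigO_at0 (fun u w => lie D1 D2 (q1 sigma a b c) (q2 sigma a b c) u w
                          - coef * (psi b c u w) ^ 2) 5) /\
  (1 <= c -> coef < 0).
Proof.
  cbv zeta. rewrite (jac11_ystar1 b sigma hb1 hsigma). unfold jac12, jac21, jac22.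
  assert (Hdet : 0 < c - b ^ 2) by nra.
  split; [apply fhn_stationary; lra|].
  do 2 (split; [ring|]). split; [nra|].
  split; [apply char_roots_purely_imaginary; [ring | nra]|].
  split; [intros u w Huw; apply psi_pos_def; [lra | exact Huw]|].
  split; [intros; unfold psi, qform; ring|].
  split; [intros; apply lie_lin_qform_kernel; lra|].
  split; [|intros; apply fhn_coef_neg; lra].
  destruct (cubic_field_normal_form b c (ystar1 sigma b) ltac:(lra))
    as (psihat & D1 & D2 & Hdiff & Hpsi & Hlie).
  exists psihat, D1, D2. repeat split; auto.
  eapply bigO_ext; [|exact Hlie]. intros u w. unfold lie.
  rewrite q1_translated, q2_translated, resonant_coef_ystar1 by lra. reflexivity.
Qed.
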